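(* Let $P,Q\in\mathbb P_d$ and $t\in[0,1]$, and put $R_1:=\big[\gamma^{\mathrm{BW}}_{P^{-1}Q}(t)\big]^{-1}$ and $R_2:=\big[\gamma^{\mathrm{BW}}_{Q^{-1}P}(t)\big]^{-1}$. Then $\operatorname{F}_{R_1}(P,Q)=\operatorname{F}_{R_2}(P,Q)$.
   Context: $\mathbb P_d$ is the set of $d\times d$ complex positive definite matrices; $A\#B:=A^{1/2}(A^{-1/2}BA^{-1/2})^{1/2}A^{1/2}$. The Bures–Wasserstein geodesic between $A,B\in\mathbb P_d$ is $\gamma^{\mathrm{BW}}_{AB}(t):=[(1-t)\mathbb I+t\,A^{-1}\#B]\,A\,[(1-t)\mathbb I+t\,A^{-1}\#B]$, $t\in[0,1]$. The generalized fidelity is $\operatorname{F}_R(P,Q):=\operatorname{Tr}\big[\sqrt{R^{1/2}PR^{1/2}}\,R^{-1}\sqrt{R^{1/2}QR^{1/2}}\big]$. *)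

From HB Require Import structures.
From mathcomp Require Import all_boot all_order all_algebra.
From mathcomp Require Import complex.
From mathcomp Require Import reals.
From Stdlib Require Import ClassicalEpsilon.

Set Implicit Arguments.
Unset Strict Implicit.
Unset Printing Implicit Defensive.

Import Order.TTheory GRing.Theory Num.Theory.
Local Open Scope ring_scope.

Section MatrixMeans.
Variable C : numClosedFieldType.

Definition adjmx (n : nat) (A : 'M[C]_n) : 'M[C]_n := (map_mx Num.conj A)^T.

Definition posdefmx (n : nat) (A : 'M[C]_n) : Prop :=
  adjmx A = A /\
  forall v : 'rV[C]_n, v != 0 -> 0 < (v *m A *m (map_mx Num.conj v)^T) ord0 ord0.

Definition psdmx (n : nat) (A : 'M[C]_n) : Prop :=
  adjmx A = A /\
  forall v : 'rV[C]_n, 0 <= (v *m A *m (map_mx Num.conj v)^T) ord0 ord0.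

Definition sqrtmx (n : nat) (A : 'M[C]_n) : 'M[C]_n :=
  epsilon (inhabits 0) (fun S => psdmx S /\ S *m S = A).

Definition gmeanmx (n : nat) (A B : 'M[C]_n) : 'M[C]_n :=
  let sA := sqrtmx A in
  let isA := invmx sA in
  sA *m sqrtmx (isA *m B *m isA) *m sA.

Definition gammaBW (n : nat) (A B : 'M[C]_n) (t : C) : 'M[C]_n :=
  let M := (1 - t)%:M + t *: gmeanmx (invmx A) B in
  M *m A *m M.

Definition genfid (n : nat) (R P Q : 'M[C]_n) : C :=
  let sR := sqrtmx R in
  \tr (sqrtmx (sR *m P *m sR) *m invmx R *m sqrtmx (sR *m Q *m sR)).

End MatrixMeans.

From HB Require Import structures.
From mathcomp Require Import all_boot all_order all_algebra.
From mathcomp Require Import complex.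
From mathcomp Require Import reals.
From mathcomp Require Import spectral.
From Stdlib Require Import ClassicalEpsilon.

(* Put G := P # Q.  Then G P^-1 G = Q, and since the positive semidefinite
   solution X of a Riccati equation X A X = B is unique, also Q # P = G.  Both
   geodesics are therefore built from M := (1 - t) I + t G, giving
   R1 = M^-1 P M^-1 and R2 = M^-1 Q M^-1.
   If X R X = P and Y R Y = Q with X, Y >= 0, then
   sqrt(R^1/2 P R^1/2) = R^1/2 X R^1/2, so F_R(P, Q) = tr (X Y R).
   Let Z >= 0 solve Z R2 Z = P.  For R1 take X = M and Y = M Z^-1 M, for R2
   take X = Z and Y = M: both traces reduce to tr (M Z^-1 P). *)

Set Implicit Arguments.
Unset Strict Implicit.
Unset Printing Implicit Defensive.

Import Order.TTheory GRing.Theory Num.Theory.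
Local Open Scope ring_scope.

Section PsdMatrices.
Variable C : numClosedFieldType.

(* [adjmx] for rectangular matrices, so that it also applies to row vectors. *)
Definition adj m n (A : 'M[C]_(m, n)) : 'M[C]_(n, m) := (map_mx Num.conj A)^T.

Lemma adjM m n p (A : 'M[C]_(m, n)) (B : 'M[C]_(n, p)) :
  adj (A *m B) = adj B *m adj A.
Proof. by rewrite /adj map_mxM trmx_mul. Qed.

Lemma adjK m n (A : 'M[C]_(m, n)) : adj (adj A) = A.
Proof. by apply/matrixP => i j; rewrite !mxE conjCK. Qed.

Lemma adjD m n (A B : 'M[C]_(m, n)) : adj (A + B) = adj A + adj B.
Proof. by apply/matrixP => i j; rewrite !mxE rmorphD. Qed.

Lemma adjN m n (A : 'M[C]_(m, n)) : adj (- A) = - adj A.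
Proof. by apply/matrixP => i j; rewrite !mxE rmorphN. Qed.

Lemma adjZ m n a (A : 'M[C]_(m, n)) : adj (a *: A) = a^* *: adj A.
Proof. by apply/matrixP => i j; rewrite !mxE rmorphM. Qed.

Lemma adj1 n : adj (1%:M : 'M[C]_n) = 1%:M.
Proof. by rewrite /adj map_mx1 trmx1. Qed.

Lemma adjV n (A : 'M[C]_n) : adj (invmx A) = invmx (adj A).
Proof. by rewrite /adj map_invmx trmx_inv. Qed.

Lemma map_conj_trmx m n (A : 'M[C]_(m, n)) : map_mx Num.conj A^T = adj A.
Proof. by rewrite /adj map_trmx. Qed.

Lemma invmxM n (A B : 'M[C]_n) : A \in unitmx -> B \in unitmx ->
  invmx (A *m B) = invmx B *m invmx A.
Proof.
move=> uA uB; have uAB : A *m B \in unitmx by rewrite unitmx_mul uA uB.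
have h : A *m B *m (invmx B *m invmx A) = 1%:M.
  by rewrite mulmxA (mulmxK uB) (mulmxV uA).
by rewrite -[RHS]mul1mx -(mulVmx uAB) -mulmxA h mulmx1.
Qed.

Lemma dotmx_adj n (u v : 'rV[C]_n) : (u *m adj v) 0 0 = dotmx u v.
Proof. by rewrite dotmxE map_conj_trmx. Qed.

Definition qf n (A : 'M[C]_n) (v : 'rV[C]_n) : C := (v *m A *m adj v) 0 0.

Definition psd n (A : 'M[C]_n) := adj A = A /\ forall v, 0 <= qf A v.

Lemma qf_ge0 n (A : 'M[C]_n) v : psd A -> 0 <= qf A v.
Proof. by move=> pA; apply: pA.2. Qed.

Lemma qfD n (A B : 'M[C]_n) v : qf (A + B) v = qf A v + qf B v.
Proof. by rewrite /qf mulmxDr mulmxDl mxE. Qed.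

Lemma qfZ n a (A : 'M[C]_n) v : qf (a *: A) v = a * qf A v.
Proof. by rewrite /qf -scalemxAr -scalemxAl mxE. Qed.

Lemma qf_row n (A U : 'M[C]_n) j : qf A (row j U) = (U *m A *m adj U) j j.
Proof.
rewrite /qf !mxE; apply: eq_bigr => k _; rewrite !mxE; congr (_ * _).
by apply: eq_bigr => l _; rewrite !mxE.
Qed.

Lemma psd_congr n (B A : 'M[C]_n) : psd A -> psd (B *m A *m adj B).
Proof.
move=> [hA qA]; split; first by rewrite !adjM adjK hA mulmxA.
by move=> v; have := qA (v *m B); rewrite /qf adjM !mulmxA.
Qed.

Lemma psd_hconj n (B A : 'M[C]_n) : adj B = B -> psd A -> psd (B *m A *m B).
Proof. by move=> hB /(psd_congr B); rewrite hB. Qed.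

Lemma psdD n (A B : 'M[C]_n) : psd A -> psd B -> psd (A + B).
Proof.
move=> [hA qA] [hB qB]; split; first by rewrite adjD hA hB.
by move=> v; rewrite qfD addr_ge0.
Qed.

Lemma psdZ n a (A : 'M[C]_n) : 0 <= a -> psd A -> psd (a *: A).
Proof.
move=> a0 [hA qA]; split; first by rewrite adjZ hA conj_Creal // ger0_real.
by move=> v; rewrite qfZ mulr_ge0.
Qed.

Lemma psd1 n : psd (1%:M : 'M[C]_n).
Proof. by split=> [|v]; rewrite ?adj1 // /qf mulmx1 dotmx_adj dnorm_ge0. Qed.

Lemma psdV n (A : 'M[C]_n) : psd A -> A \in unitmx -> psd (invmx A).
Proof.
by move=> pA uA; have := psd_congr (invmx A) pA; rewrite adjV pA.1 mulmxK.
Qed.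

Lemma psd_diag n (d : 'rV[C]_n) : (forall j, 0 <= d 0 j) -> psd (diag_mx d).
Proof.
move=> d_ge0; split=> [|v].
  apply/matrixP => i j; rewrite !mxE eq_sym.
  by case: eqP => [->|_]; rewrite ?mulr0n ?mulr1n ?rmorph0 // conj_Creal ?ger0_real.
rewrite /qf mul_mx_diag !mxE sumr_ge0 // => j _; rewrite !mxE.
by rewrite mulrAC mulr_ge0 ?mul_conjC_ge0.
Qed.

Lemma hermitian_diag n (A : 'M[C]_n) : adj A = A ->
  exists U (d : 'rV[C]_n),
    U *m adj U = 1%:M /\ A = adj U *m diag_mx d *m U.
Proof.
move=> hA; have /orthomx_spectralP eA : A \is normalmx.
  by apply/normalmxP; rewrite map_conj_trmx hA.
have uU := spectral_unitarymx A.
exists (spectralmx A), (spectral_diag A).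
have iU : invmx (spectralmx A) = adj (spectralmx A).
  by rewrite invmx_unitary // map_conj_trmx.
by rewrite -iU mulmxV ?unitarymx_unit.
Qed.

Lemma psd_sqrt_ex n (A : 'M[C]_n) : psd A -> exists S, psd S /\ S *m S = A.
Proof.
move=> pA; have [U [d [UU eA]]] := hermitian_diag pA.1.
have d_ge0 j : 0 <= d 0 j.
  have := qf_ge0 (row j U) pA.
  by rewrite qf_row eA !mulmxA UU mul1mx -mulmxA UU mulmx1 mxE eqxx mulr1n.
pose e := \row_j sqrtC (d 0 j).
exists (adj U *m diag_mx e *m U); split.
  rewrite -{2}(adjK U); apply: psd_congr; apply: psd_diag => j.
  by rewrite mxE sqrtC_ge0.
rewrite -!mulmxA [U *m _]mulmxA UU mul1mx (mulmxA (diag_mx e)) mulmx_diag eA mulmxA.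
by congr (_ *m diag_mx _ *m _); apply/rowP => j; rewrite !mxE -expr2 sqrtCK.
Qed.

Lemma sqrtmx_spec n (A : 'M[C]_n) : psd A ->
  psd (sqrtmx A) /\ sqrtmx A *m sqrtmx A = A.
Proof.
move=> /psd_sqrt_ex sqrtA.
exact: (epsilon_spec (inhabits 0) (fun S => psdmx S /\ S *m S = A)).
Qed.

Lemma psd_qf_eq0 n (A : 'M[C]_n) v : psd A -> qf A v = 0 -> v *m A = 0.
Proof.
move=> /sqrtmx_spec [[hS _] SS]; rewrite /qf -SS !mulmxA -{2}hS -mulmxA -adjM.
by move/eqP; rewrite dotmx_adj dnorm_eq0 => /eqP ->; rewrite mul0mx.
Qed.

(* For D := S - T we have S D + D T = 0; pairing it with an eigenvector v of
   the Hermitian D gives a (qf S v + qf T v) = 0 for the (real) eigenvalue a. *)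
Lemma psd_sqrt_diff_eigenvalue n (S T : 'M[C]_n) (v : 'rV[C]_n) a :
  psd S -> psd T -> S *m S = T *m T -> v != 0 -> v *m (S - T) = a *: v -> a = 0.
Proof.
move=> pS pT ST v0; set D := S - T => vD.
have hD : adj D = D by rewrite adjD adjN pS.1 pT.1.
have SDT : S *m D + D *m T = 0 by rewrite mulmxBr mulmxBl ST addrA subrK subrr.
have Dv : D *m adj v = a^* *: adj v by rewrite -{1}hD -adjM vD adjZ.
have scale11 c (X : 'M[C]_1) : (c *: X) 0 0 = c * X 0 0 by rewrite mxE.
have vv0 : (v *m adj v) 0 0 != 0 by rewrite dotmx_adj dnorm_eq0.
have a_real : a^* = a.
  apply: (mulIf vv0); transitivity ((v *m D *m adj v) 0 0).
    by rewrite -mulmxA Dv -scalemxAr scale11.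
  by rewrite vD -scalemxAl scale11.
have : qf (S *m D + D *m T) v = 0 by rewrite SDT /qf mulmx0 mul0mx mxE.
rewrite qfD {1 2}/qf !mulmxA -(mulmxA (v *m S)) Dv a_real vD.
rewrite -scalemxAr -!scalemxAl !scale11 -mulrDr => /eqP; rewrite mulf_eq0.
case/orP=> [/eqP //|]; rewrite paddr_eq0 ?(qf_ge0 v pS) ?(qf_ge0 v pT) //.
case/andP=> /eqP/(psd_qf_eq0 pS) vS /eqP/(psd_qf_eq0 pT) vT.
have : a *: v == 0 by rewrite -vD mulmxBr vS vT subrr.
by rewrite scaler_eq0 (negbTE v0) orbF => /eqP.
Qed.

Lemma psd_sqrt_uniq n (S T : 'M[C]_n) : psd S -> psd T -> S *m S = T *m T -> S = T.
Proof.
move=> pS pT ST; have hD : adj (S - T) = S - T by rewrite adjD adjN pS.1 pT.1.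
have [U [l [UU eD]]] := hermitian_diag hD.
suff l0 : l = 0 by apply/eqP; rewrite -subr_eq0 eD l0 linear0 mulmx0 mul0mx.
apply/rowP => j; rewrite mxE; apply: (psd_sqrt_diff_eigenvalue (v := row j U) pS pT ST).
  apply/eqP => Uj0; have := qf_row 1%:M U j.
  by rewrite /qf !mulmx1 UU Uj0 mul0mx !mxE eqxx => /eqP; rewrite eq_sym oner_eq0.
by rewrite -row_mul eD !mulmxA UU mul1mx; apply/rowP => k; rewrite mul_diag_mx !mxE.
Qed.

Lemma sqrtmx_unique n (A S : 'M[C]_n) : psd S -> S *m S = A -> sqrtmx A = S.
Proof.
move=> pS SA; have pA : psd A.
  by rewrite -SA -[S in S *m _]mulmx1; apply: psd_hconj pS.1 (psd1 n).
by have [? ?] := sqrtmx_spec pA; apply: psd_sqrt_uniq; rewrite // SA.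
Qed.

Lemma sqrtmx_unit n (A : 'M[C]_n) : psd A -> A \in unitmx -> sqrtmx A \in unitmx.
Proof.
by move=> /sqrtmx_spec [_ e]; rewrite -{1}e unitmx_mul => /andP [].
Qed.

Lemma psd_riccati_uniq n (A X Y : 'M[C]_n) : psd A -> A \in unitmx ->
  psd X -> psd Y -> X *m A *m X = Y *m A *m Y -> X = Y.
Proof.
move=> pA uA pX pY XAX_YAY; have [pa aa] := sqrtmx_spec pA.
have ua := sqrtmx_unit pA uA; set a := sqrtmx A in pa aa ua.
suff aXa_aYa : a *m X *m a = a *m Y *m a.
  by rewrite -(mulKmx ua X) -(mulmxK ua (a *m X)) aXa_aYa mulmxK // mulKmx.
have aZa2 Z : a *m Z *m a *m (a *m Z *m a) = a *m (Z *m A *m Z) *m a.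
  by rewrite -aa !mulmxA.
by apply: psd_sqrt_uniq; rewrite ?aZa2 ?XAX_YAY //; apply: psd_hconj pa.1 _.
Qed.

(* The solution of X A X = B for A = (s s)^-1 is s (s^-1 B s^-1)^1/2 s; with
   s = P^1/2 this is P # B, and with s = R^-1/2 it solves X R X = B. *)
Lemma riccati_sqrtmx n (s B : 'M[C]_n) : adj s = s -> s \in unitmx -> psd B ->
  let X := s *m sqrtmx (invmx s *m B *m invmx s) *m s in
  [/\ psd X, X *m invmx (s *m s) *m X = B & B \in unitmx -> X \in unitmx].
Proof.
move=> hs us pB X; have his : adj (invmx s) = invmx s by rewrite adjV hs.
have pK : psd (invmx s *m B *m invmx s) by apply: psd_hconj.
have [pk kk] := sqrtmx_spec pK; split.
- exact: psd_hconj.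
- rewrite /X invmxM // !mulmxA (mulmxK us) (mulmxKV us) -(mulmxA _ _ (sqrtmx _)) kk.
  by rewrite !mulmxA (mulmxV us) mul1mx (mulmxKV us).
move=> uB; have uK : invmx s *m B *m invmx s \in unitmx.
  by rewrite !unitmx_mul unitmx_inv us uB.
by rewrite !unitmx_mul us sqrtmx_unit.
Qed.

Lemma riccati_solution n (R B : 'M[C]_n) : psd R -> R \in unitmx ->
  psd B -> B \in unitmx ->
  exists X, [/\ psd X, X *m R *m X = B & X \in unitmx].
Proof.
move=> pR uR pB uB; have [[ps ss] us] := (sqrtmx_spec pR, sqrtmx_unit pR uR).
have his : adj (invmx (sqrtmx R)) = invmx (sqrtmx R) by rewrite adjV ps.1.
have uis : invmx (sqrtmx R) \in unitmx by rewrite unitmx_inv.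
have [pX XRX uX] := riccati_sqrtmx his uis pB.
have iss : invmx (invmx (sqrtmx R) *m invmx (sqrtmx R)) = R.
  by rewrite -invmxM // invmxK ss.
by eexists; split; [exact: pX | move: XRX; rewrite iss | exact: uX uB].
Qed.

Lemma posdefmx_psd n (A : 'M[C]_n) : posdefmx A -> psd A /\ A \in unitmx.
Proof.
move=> [hA qA_gt0]; split.
  split=> // v; have [->|v0] := eqVneq v 0; last exact/ltW/qA_gt0.
  by rewrite /qf !mul0mx mxE.
rewrite unitmxE unitfE; apply/negP => /det0P [v v0 vA].
by have := qA_gt0 v v0; rewrite vA mul0mx mxE ltxx.
Qed.

Lemma psd_unitmxD n (A B : 'M[C]_n) : psd A -> psd B -> B \in unitmx ->
  A + B \in unitmx.
Proof.
move=> pA pB uB; rewrite unitmxE unitfE; apply/negP => /det0P [v v0 vAB].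
have : qf (A + B) v = 0 by rewrite /qf vAB mul0mx mxE.
rewrite qfD => /eqP; rewrite paddr_eq0 ?qf_ge0 // => /andP [_ /eqP /(psd_qf_eq0 pB)].
move/(congr1 (mulmx^~ (invmx B))); rewrite mulmxK // mul0mx => /eqP.
by rewrite (negbTE v0).
Qed.

Lemma genfid_riccati n (R P Q X Y : 'M[C]_n) : psd R -> R \in unitmx ->
  psd X -> psd Y -> X *m R *m X = P -> Y *m R *m Y = Q ->
  genfid R P Q = \tr (X *m Y *m R).
Proof.
move=> pR uR pX pY XRX YRY; have [ps ss] := sqrtmx_spec pR.
have us := sqrtmx_unit pR uR; rewrite /genfid; set s := sqrtmx R in ps ss us *.
have sqrt_conj Z B : psd Z -> Z *m R *m Z = B -> sqrtmx (s *m B *m s) = s *m Z *m s.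
  move=> pZ <-; apply: sqrtmx_unique; first exact: psd_hconj ps.1 pZ.
  by rewrite -ss !mulmxA.
rewrite (sqrt_conj X P) // (sqrt_conj Y Q) // -[in invmx R]ss invmxM // !mulmxA.
rewrite (mulmxK us) (mulmxKV us) [LHS]mxtrace_mulC !mulmxA ss.
by rewrite -mulmxA [LHS]mxtrace_mulC.
Qed.

Lemma genfid_hconj_invmx n (M P Q : 'M[C]_n) : psd M -> M \in unitmx ->
  psd P -> P \in unitmx -> psd Q -> Q \in unitmx ->
  genfid (invmx M *m P *m invmx M) P Q = genfid (invmx M *m Q *m invmx M) P Q.
Proof.
move=> pM uM pP uP pQ uQ; have uiM : invmx M \in unitmx by rewrite unitmx_inv.
have hiM : adj (invmx M) = invmx M by rewrite adjV pM.1.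
set R1 := invmx M *m P *m invmx M; set R2 := invmx M *m Q *m invmx M.
have pR1 : psd R1 by apply: psd_hconj.
have pR2 : psd R2 by apply: psd_hconj.
have uR1 : R1 \in unitmx by rewrite !unitmx_mul uiM uP.
have uR2 : R2 \in unitmx by rewrite !unitmx_mul uiM uQ.
have [Z [pZ ZR2Z uZ]] := riccati_solution pR2 uR2 pP uP.
have MRM B : M *m (invmx M *m B *m invmx M) *m M = B.
  by rewrite !mulmxA (mulmxV uM) mul1mx (mulmxKV uM).
set Y := M *m invmx Z *m M.
have pY : psd Y by apply: psd_hconj pM.1 (psdV pZ uZ).
have YR1Y : Y *m R1 *m Y = Q.
  have -> : Y *m R1 *m Y = M *m (invmx Z *m (M *m R1 *m M) *m invmx Z) *m M.
    by rewrite /Y !mulmxA.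
  rewrite /R1 MRM -ZR2Z !mulmxA (mulmxKV uZ) (mulmxK uZ).
  by rewrite (mulmxV uM) mul1mx (mulmxKV uM).
rewrite (genfid_riccati pR1 uR1 pM pY (MRM P) YR1Y).
rewrite (genfid_riccati pR2 uR2 pZ pM ZR2Z (MRM Q)).
transitivity (\tr (M *m invmx Z *m P)).
  rewrite /Y /R1 !mulmxA (mulmxK uM) [LHS]mxtrace_mulC !mulmxA.
  by rewrite (mulVmx uM) mul1mx.
by rewrite -ZR2Z !mulmxA (mulmxKV uZ) [LHS]mxtrace_mulC !mulmxA.
Qed.

Lemma gmeanmx_riccati n (P Q : 'M[C]_n) : psd P -> P \in unitmx ->
  psd Q -> Q \in unitmx ->
  [/\ psd (gmeanmx P Q), gmeanmx P Q \in unitmx &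
      gmeanmx P Q *m invmx P *m gmeanmx P Q = Q].
Proof.
move=> pP uP pQ uQ; have [[ps ss] us] := (sqrtmx_spec pP, sqrtmx_unit pP uP).
have [pG GPG uG] := riccati_sqrtmx ps.1 us pQ.
by split; [exact: pG | exact: uG | rewrite -[in invmx P]ss].
Qed.

Lemma gmeanmxC n (P Q : 'M[C]_n) : psd P -> P \in unitmx -> psd Q -> Q \in unitmx ->
  gmeanmx Q P = gmeanmx P Q.
Proof.
move=> pP uP pQ uQ; have [pG' _ GQG'] := gmeanmx_riccati pQ uQ pP uP.
have [pG uG] := gmeanmx_riccati pP uP pQ uQ; set G := gmeanmx P Q => GPG.
apply: (psd_riccati_uniq (psdV pQ uQ)); rewrite ?unitmx_inv // GQG' -GPG.
have uGiP : G *m invmx P \in unitmx by rewrite unitmx_mul uG unitmx_inv.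
by rewrite (invmxM uGiP uG) (invmxM uG) ?unitmx_inv // invmxK mulKVmx ?mulmxKV.
Qed.

Lemma psd_unitmx_lerp n (G : 'M[C]_n) t : psd G -> G \in unitmx -> 0 <= t <= 1 ->
  psd ((1 - t)%:M + t *: G) /\ (1 - t)%:M + t *: G \in unitmx.
Proof.
move=> pG uG /andP [t0 t1]; rewrite -scalemx1.
have pI : psd ((1 - t) *: 1%:M : 'M[C]_n) by apply: psdZ (psd1 n); rewrite subr_ge0.
have ptG := psdZ t0 pG; split; first exact: psdD.
have [->|t_neq1] := eqVneq t 1; first by rewrite subrr scale0r add0r scale1r.
rewrite addrC psd_unitmxD //.
by rewrite unitmxZ ?unitmx1 // unitfE subr_eq0 eq_sym.
Qed.

Lemma genfid_gammaBW n (P Q : 'M[C]_n) t : posdefmx P -> posdefmx Q ->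
  0 <= t <= 1 ->
  genfid (invmx (gammaBW (invmx P) Q t)) P Q =
  genfid (invmx (gammaBW (invmx Q) P t)) P Q.
Proof.
move=> /posdefmx_psd [pP uP] /posdefmx_psd [pQ uQ] t01.
have [pG uG _] := gmeanmx_riccati pP uP pQ uQ.
have [pM uM] := psd_unitmx_lerp pG uG t01.
rewrite /gammaBW !invmxK (gmeanmxC pP uP pQ uQ).
rewrite !invmxM ?unitmx_mul ?unitmx_inv ?uM ?uP ?uQ // !invmxK !mulmxA.
exact: genfid_hconj_invmx.
Qed.

End PsdMatrices.

Local Open Scope complex_scope.

Theorem mainTheorem7 (R : realType) (d : nat) (P Q : 'M[R[i]]_d) (t : R) :
  posdefmx P -> posdefmx Q -> (0 <= t <= 1)%R ->
  let R1 := invmx (gammaBW (invmx P) Q t%:C) in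
  let R2 := invmx (gammaBW (invmx Q) P t%:C) in
  genfid R1 P Q = genfid R2 P Q.
Proof.
move=> pP pQ t01 R1 R2; apply: genfid_gammaBW => //.
by rewrite -[0]/(0%:C) -[1]/(1%:C) !lecR.
Qed.
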